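(* Consider the planar ODE system $$\frac{du}{dt}=a_1u-b_1u^2-c_1uv,\qquad \frac{dv}{dt}=\frac{a_2v}{1+ku}-b_2v^2-c_2uv,$$ with positive parameters $a_1,a_2,b_1,b_2,c_1,c_2$ and fear coefficient $k\ge 0$. Suppose that for $k=0$ the system is in the weak competition setting, i.e. $\frac{c_2}{b_1}<\frac{a_2}{a_1}<\frac{b_2}{c_1}$ and $b_1b_2-c_1c_2>0$, and moreover $b_2b_1>2c_1c_2$. Then for every fear coefficient $k$ with $$k>k_c=\frac{1}{a_1^2c_2}\left(b_1^2a_2-a_1c_2b_1\right),$$ the equilibrium $(\frac{a_1}{b_1},0)$ is globally asymptotically stable (i.e. $u$ competitively excludes $v$).
   Context: $u,v\ge 0$ are population densities of two competing species; $v$ is ''fearful'' of $u$, modeled by the factor $\frac{1}{1+ku}$ in the growth rate of $v$. Global asymptotic stability refers to solutions with positive initial data. *)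

From Stdlib Require Import Reals.
From Coquelicot Require Import Coquelicot.
Open Scope R_scope.

Definition f_u (a1 b1 c1 : R) (u v : R) : R := a1 * u - b1 * u ^ 2 - c1 * u * v.
Definition f_v (a2 b2 c2 k : R) (u v : R) : R :=
  a2 * v / (1 + k * u) - b2 * v ^ 2 - c2 * u * v.

Definition is_solution (a1 a2 b1 b2 c1 c2 k : R) (u v : R -> R) : Prop :=
  forall t, 0 <= t ->
    is_derive u t (f_u a1 b1 c1 (u t) (v t)) /\
    is_derive v t (f_v a2 b2 c2 k (u t) (v t)).

Definition dist2 (x1 y1 x2 y2 : R) : R := sqrt ((x1 - x2) ^ 2 + (y1 - y2) ^ 2).

Definition GAS (a1 a2 b1 b2 c1 c2 k : R) (ue ve : R) : Prop :=
  (forall eps, 0 < eps -> exists delta, 0 < delta /\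
     forall u v, is_solution a1 a2 b1 b2 c1 c2 k u v ->
       0 < u 0 -> 0 < v 0 -> dist2 (u 0) (v 0) ue ve < delta ->
       forall t, 0 <= t -> dist2 (u t) (v t) ue ve < eps)
  /\
  (forall u v, is_solution a1 a2 b1 b2 c1 c2 k u v ->
     0 < u 0 -> 0 < v 0 ->
     is_lim u p_infty ue /\ is_lim v p_infty ve).

From Stdlib Require Import Reals Lra Psatz.
From Coquelicot Require Import Coquelicot.
Open Scope R_scope.

(* Use the Volterra-type Lyapunov function
     V(u, v) = u - us - us ln (u / us) + al v,   us = a1 / b1,   al = c1 a1 / (a2 b1).
   With y = us - u, z = c1 v / b1, rho = a1 b2 / (a2 c1) > 1 (weak competition) and
   h(u) = a2 / (1 + k u) - c2 u, its derivative along positive solutions is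
     V' = b1 (- y^2 + y z - rho z^2) + al v h(u).
   The threshold k > k_c says exactly that h(us) < 0; hence h <= 0 on [us, oo) and h lies
   below its chord a2 (us - u) / us on (0, us], and in both cases V' <= - s (y^2 + z^2)
   for some s > 0.  Since V is small exactly near (us, 0), this gives Lyapunov stability,
   and since V' is bounded away from 0 outside every sublevel set of V, global attraction. *)

Lemma ex_derive_continuity_pt (f : R -> R) t : ex_derive f t -> continuity_pt f t.
Proof. intro H. apply continuity_pt_filterlim. exact (ex_derive_continuous f t H). Qed.

Lemma nonpos_derive_nonincreasing (f df : R -> R) a b : a <= b ->
  (forall t, a <= t <= b -> is_derive f t (df t)) ->
  (forall t, a <= t <= b -> df t <= 0) -> f b <= f a.
Proof.
  intros Hab Hf Hdf.
  destruct (MVT_gen f a b df) as [c [Hc Hfc]];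
    rewrite ?Rmin_left, ?Rmax_right in * by lra.
  - intros t Ht; apply Hf; lra.
  - intros t Ht; apply ex_derive_continuity_pt; exists (df t); apply Hf; lra.
  - assert (df c <= 0) by (apply Hdf; lra). nra.
Qed.

Lemma pos_of_is_derive_mult (y G : R -> R) :
  (forall t, 0 <= t -> is_derive y t (y t * G t)) ->
  (forall t, 0 <= t -> continuity_pt G t) ->
  0 < y 0 -> forall t, 0 <= t -> 0 < y t.
Proof.
  intros Hy HG Hy0.
  (* [G] is extended evenly to the whole line so that it has a primitive [I]. *)
  set (g := fun s => G (Rabs s)).
  assert (Hg : forall s, continuous g s).
  { intro s. apply continuity_pt_filterlim.
    apply (continuity_pt_comp Rabs G); [apply Rcontinuity_abs | apply HG, Rabs_pos]. }
  set (I := fun t => RInt g 0 t).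
  assert (HI : forall t, is_derive I t (g t)).
  { intro t. apply (is_derive_RInt g I 0 t); [|apply Hg].
    apply filter_forall; intro b. apply (RInt_correct g 0 b), ex_RInt_continuous.
    intros; apply Hg. }
  set (w := fun t => y t * exp (- I t)).
  assert (Hw : forall t, 0 <= t -> is_derive (fun s => - w s) t 0).
  { intros t Ht. unfold w. auto_derive.
    - split; [exists (y t * G t); apply Hy, Ht | split; [exists (g t); apply HI | easy]].
    - replace (Derive (fun x : R => y x) t) with (y t * G t)
        by (symmetry; apply is_derive_unique, Hy, Ht).
      replace (Derive (fun x : R => I x) t) with (g t)
        by (symmetry; apply is_derive_unique, HI).
      unfold g; rewrite Rabs_pos_eq by exact Ht. ring. }
  intros t Ht.
  assert (Hwt : - w t <= - w 0).
  { apply (nonpos_derive_nonincreasing (fun s => - w s) (fun _ => 0)); [exact Ht | |intros; lra].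
    intros s Hs; apply Hw; lra. }
  assert (0 < w 0) by (apply Rmult_lt_0_compat; [exact Hy0 | apply exp_pos]).
  assert (0 < exp (- I t)) by apply exp_pos.
  unfold w in *. nra.
Qed.

Lemma eventually_lt_of_dissipation (V D : R -> R) c eta : 0 < c ->
  (forall t, 0 <= t -> is_derive V t (D t)) ->
  (forall t, 0 <= t -> D t <= 0) ->
  (forall t, 0 <= t -> eta <= V t -> D t <= - c) ->
  (forall t, 0 <= t -> 0 <= V t) ->
  exists T, 0 <= T /\ forall t, T <= t -> V t < eta.
Proof.
  intros Hc HV HD HDc HV0.
  assert (Hmono : forall s t, 0 <= s -> s <= t -> V t <= V s).
  { intros s t Hs Hst. apply (nonpos_derive_nonincreasing V D s t Hst);
      intros; [apply HV | apply HD]; lra. }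
  set (T := V 0 / c + 1).
  assert (HT : 0 <= T)
    by (unfold T; assert (0 <= V 0 / c) by (apply Rdiv_le_0_compat; auto with real); lra).
  exists T; split; [exact HT|].
  destruct (Rlt_le_dec (V T) eta) as [HVT | HVT].
  { intros t Ht. apply (Rle_lt_trans _ (V T)); [apply Hmono; lra | exact HVT]. }
  (* Otherwise [V] stays above [eta] on [0, T], so it drops by at least [c T > V 0]. *)
  assert (Hdrop : V T + c * T <= V 0 + c * 0).
  { apply (nonpos_derive_nonincreasing (fun s => V s + c * s) (fun s => D s + c)); [exact HT| |].
    - intros t Ht. apply (is_derive_plus V (fun s => c * s)); [apply HV; lra|].
      auto_derive; auto; ring.
    - intros t Ht. assert (V T <= V t) by (apply Hmono; lra).
      assert (D t <= - c) by (apply HDc; lra). lra. }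
  assert (c * T = V 0 + c) by (unfold T; field; lra).
  assert (0 <= V T) by (apply HV0, HT). lra.
Qed.

Lemma quadratic_form_neg_def rho : 1 < rho ->
  exists s, 0 < s <= 1 /\
    forall y z, - y ^ 2 + 2 * y * z - rho * z ^ 2 <= - s * (y ^ 2 + z ^ 2).
Proof.
  intro Hrho. exists ((rho - 1) / (rho + 1)).
  set (s := (rho - 1) / (rho + 1)).
  assert (Hs : s * (rho + 1) = rho - 1) by (unfold s; field; lra).
  assert (Hs0 : 0 < s) by (unfold s; apply Rdiv_lt_0_compat; lra).
  assert (Hdet : 1 <= (1 - s) * (rho - s)) by nra.
  split; [nra|]. intros y z.
  assert (Hsq : (1 - s) * ((1 - s) * y ^ 2 - 2 * y * z + (rho - s) * z ^ 2)
                = ((1 - s) * y - z) ^ 2 + ((1 - s) * (rho - s) - 1) * z ^ 2) by ring.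
  assert (0 <= (1 - s) * ((1 - s) * y ^ 2 - 2 * y * z + (rho - s) * z ^ 2)).
  { rewrite Hsq. assert (0 <= z ^ 2) by apply pow2_ge_0.
    assert (0 <= ((1 - s) * y - z) ^ 2) by apply pow2_ge_0. nra. }
  assert (1 - s > 0) by nra.
  assert (0 <= (1 - s) * y ^ 2 - 2 * y * z + (rho - s) * z ^ 2)
    by (apply (Rmult_le_reg_l (1 - s)); lra).
  lra.
Qed.

Definition volterra (us u : R) : R := u - us - us * ln (u / us).

Lemma ln_le_sub_1 x : 0 < x -> ln x <= x - 1.
Proof. intro Hx. generalize (exp_ineq1_le (ln x)). rewrite exp_ln by exact Hx. lra. Qed.

Lemma volterra_le us u : 0 < us -> 0 < u -> volterra us u <= (u - us) ^ 2 / u.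
Proof.
  intros Hus Hu. unfold volterra.
  assert (ln (us / u) <= us / u - 1) by (apply ln_le_sub_1, Rdiv_lt_0_compat; lra).
  rewrite ln_div in * by lra.
  replace ((u - us) ^ 2 / u) with (u - us + us * (us / u - 1)) by (field; lra). nra.
Qed.

Lemma volterra_ge us u : 0 < us -> 0 < u -> (sqrt u - sqrt us) ^ 2 <= volterra us u.
Proof.
  intros Hus Hu. unfold volterra.
  assert (Hx := sqrt_lt_R0 u Hu). assert (Hy := sqrt_lt_R0 us Hus).
  assert (Ex := sqrt_sqrt u (Rlt_le _ _ Hu)). assert (Ey := sqrt_sqrt us (Rlt_le _ _ Hus)).
  set (x := sqrt u) in *. set (y := sqrt us) in *. rewrite <- Ex, <- Ey.
  (* [ln (u / us) = 2 ln (x / y) <= 2 (x / y - 1)] *)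
  assert (ln (x / y) <= x / y - 1) by (apply ln_le_sub_1, Rdiv_lt_0_compat; lra).
  replace (x * x / (y * y)) with ((x / y) * (x / y)) by (field; lra).
  rewrite ln_mult by (apply Rdiv_lt_0_compat; lra).
  assert (y * y * (x / y - 1) = x * y - y * y) by (field; lra).
  nra.
Qed.

Lemma volterra_nonneg us u : 0 < us -> 0 < u -> 0 <= volterra us u.
Proof.
  intros. apply (Rle_trans _ _ _ (pow2_ge_0 (sqrt u - sqrt us))), volterra_ge; assumption.
Qed.

Definition lyap (us al u v : R) : R := volterra us u + al * v.

Lemma lyap_lt_near us al eta : 0 < us -> 0 < al -> 0 < eta ->
  exists delta, 0 < delta /\ forall u v, 0 <= v ->
    Rabs (u - us) < delta -> v < delta -> lyap us al u v < eta.
Proof.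
  intros Hus Hal Heta. set (delta := Rmin (us / 2) (eta / (1 + al))).
  assert (Hd1 : delta <= us / 2) by apply Rmin_l.
  assert (Hd2 : delta * (1 + al) <= eta) by (apply Rle_div_r; [lra | apply Rmin_r]).
  assert (Hd : 0 < delta) by (apply Rmin_pos; [lra | apply Rdiv_lt_0_compat; lra]).
  exists delta; split; [exact Hd|]. intros u v Hv Hu Hvd.
  apply Rabs_def2 in Hu.
  assert (Hu0 : 0 < u) by lra.
  assert (HF := volterra_le us u Hus Hu0).
  (* [(u - us)^2 / u < delta^2 / (us / 2) <= delta] *)
  assert ((u - us) ^ 2 / u < delta).
  { apply (Rmult_lt_reg_r u); [exact Hu0|].
    replace ((u - us) ^ 2 / u * u) with ((u - us) ^ 2) by (field; lra). nra. }
  unfold lyap. nra.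
Qed.

Lemma near_of_lyap_lt us al eps : 0 < us -> 0 < al -> 0 < eps ->
  exists eta, 0 < eta /\ forall u v, 0 < u -> 0 <= v ->
    lyap us al u v < eta -> Rabs (u - us) < eps /\ v < eps.
Proof.
  intros Hus Hal Heps. assert (Hsus := sqrt_lt_R0 us Hus).
  set (th := Rmin 1 (eps / (2 * sqrt us + 1))).
  assert (Hth1 : th <= 1) by apply Rmin_l.
  assert (Hth2 : th * (2 * sqrt us + 1) <= eps) by (apply Rle_div_r; [lra | apply Rmin_r]).
  assert (Hth : 0 < th) by (apply Rmin_pos; [lra | apply Rdiv_lt_0_compat; lra]).
  exists (Rmin (th ^ 2) (al * eps)). split; [apply Rmin_pos; nra|].
  intros u v Hu Hv HV.
  assert (HV1 := Rlt_le_trans _ _ _ HV (Rmin_l _ _)).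
  assert (HV2 := Rlt_le_trans _ _ _ HV (Rmin_r _ _)).
  unfold lyap in *. assert (HF := volterra_ge us u Hus Hu).
  assert (HF0 := volterra_nonneg us u Hus Hu).
  split; [|nra].
  set (d := sqrt u - sqrt us) in *.
  assert (Hd : Rabs d < th) by (apply Rabs_def1; nra).
  (* [u - us = d (sqrt u + sqrt us)] with [sqrt u < sqrt us + 1] *)
  assert (Eu : u - us = d * (sqrt u + sqrt us)).
  { unfold d. rewrite <- (sqrt_sqrt u) at 1 by lra. rewrite <- (sqrt_sqrt us) at 1 by lra. ring. }
  assert (Hsu : sqrt u + sqrt us <= 2 * sqrt us + 1)
    by (assert (d <= Rabs d) by apply Rle_abs; unfold d in *; lra).
  rewrite Eu, Rabs_mult, (Rabs_pos_eq (sqrt u + sqrt us)) by (generalize (sqrt_pos u); lra).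
  generalize (Rabs_pos d). nra.
Qed.

Lemma is_derive_lyap us al (u v : R -> R) t du dv : 0 < us -> 0 < u t ->
  is_derive u t du -> is_derive v t dv ->
  is_derive (fun s => lyap us al (u s) (v s)) t ((1 - us / u t) * du + al * dv).
Proof.
  intros Hus Hu Hdu Hdv. unfold lyap, volterra. auto_derive.
  - repeat split; try (eexists; eassumption). apply Rdiv_lt_0_compat; assumption.
  - replace (Derive (fun x : R => u x) t) with du by (symmetry; apply is_derive_unique, Hdu).
    replace (Derive (fun x : R => v x) t) with dv by (symmetry; apply is_derive_unique, Hdv).
    field. lra.
Qed.

Lemma dist2_lt_components x y x' y' d :
  dist2 x y x' y' < d -> Rabs (x - x') < d /\ Rabs (y - y') < d.
Proof.
  unfold dist2. intro H. destruct (sqrt_plus_sqr (x - x') (y - y')) as [Hmax _].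
  generalize (Rmax_l (Rabs (x - x')) (Rabs (y - y'))) (Rmax_r (Rabs (x - x')) (Rabs (y - y'))).
  lra.
Qed.

Lemma dist2_lt_of_components x y x' y' e :
  Rabs (x - x') < e / 2 -> Rabs (y - y') < e / 2 -> dist2 x y x' y' < e.
Proof.
  unfold dist2. intros Hx Hy. destruct (sqrt_plus_sqr (x - x') (y - y')) as [_ Hsqrt].
  assert (Hmax : Rmax (Rabs (x - x')) (Rabs (y - y')) < e / 2) by (apply Rmax_lub_lt; assumption).
  assert (H2 : sqrt 2 < 2).
  { generalize Rlt_sqrt2_0 (sqrt_sqrt 2 ltac:(lra)). nra. }
  generalize (Rmax_l (Rabs (x - x')) (Rabs (y - y'))) (Rabs_pos (x - x')). nra.
Qed.

Lemma fear_response_le_chord a2 c2 k us u :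
  0 < a2 -> 0 <= k -> 0 < u -> u <= us -> a2 <= c2 * us * (1 + k * us) ->
  a2 / (1 + k * u) - c2 * u <= a2 / us * (us - u).
Proof.
  intros Ha2 Hk Hu Huus Hfear.
  assert (Hus : 0 < us) by lra.
  assert (Hku : 0 <= k * u) by nra.
  (* multiplied by [us (1 + k u) / u] this is [a2 (1 + k u - k us) <= c2 us (1 + k u)] *)
  assert (Hkey : a2 * (1 + k * u - k * us) <= c2 * us * (1 + k * u)).
  { assert (Hc2us : 0 < c2 * us) by (apply (Rmult_lt_reg_r (1 + k * us)); [nra | lra]).
    destruct (Rle_lt_dec (1 + k * u - k * us) 0) as [Hneg | Hpos]; [nra|].
    assert (Hprod : a2 * (1 + k * u - k * us) <= c2 * us * (1 + k * us) * (1 + k * u - k * us))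
      by (apply Rmult_le_compat_r; lra).
    assert (k * us * (k * u - k * us) <= 0) by nra. nra. }
  apply (Rmult_le_reg_r (us * (1 + k * u))); [apply Rmult_lt_0_compat; lra|].
  replace ((a2 / (1 + k * u) - c2 * u) * (us * (1 + k * u)))
    with (a2 * us - c2 * u * us * (1 + k * u)) by (field; lra).
  replace (a2 / us * (us - u) * (us * (1 + k * u)))
    with (a2 * (us - u) * (1 + k * u)) by (field; lra).
  nra.
Qed.

Lemma fear_response_nonpos a2 c2 k us u :
  0 < a2 -> 0 <= k -> 0 < us -> us <= u -> a2 <= c2 * us * (1 + k * us) ->
  a2 / (1 + k * u) - c2 * u <= 0.
Proof.
  intros Ha2 Hk Hus Huus Hfear.
  assert (a2 / (1 + k * u) <= a2 / (1 + k * us))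
    by (apply Rmult_le_compat_l; [lra | apply Rinv_le_contravar; nra]).
  assert (a2 / (1 + k * us) <= c2 * us)
    by (apply Rle_div_l; nra).
  assert (0 < c2) by (apply (Rmult_lt_reg_r (us * (1 + k * us))); nra).
  nra.
Qed.

Lemma fear_threshold_bound a1 a2 b1 c2 k : 0 < a1 -> 0 < b1 -> 0 < c2 ->
  k > (b1 ^ 2 * a2 - a1 * c2 * b1) / (a1 ^ 2 * c2) ->
  a2 < c2 * (a1 / b1) * (1 + k * (a1 / b1)).
Proof.
  intros Ha1 Hb1 Hc2 Hk.
  apply Rlt_div_l in Hk; [|apply Rmult_lt_0_compat; [apply pow_lt|]; lra].
  replace (c2 * (a1 / b1) * (1 + k * (a1 / b1)))
    with ((c2 * a1 * b1 + k * (a1 ^ 2 * c2)) / b1 ^ 2) by (field; lra).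
  apply Rlt_div_r; [apply pow_lt; lra|]. lra.
Qed.

Section FearCompetition.

Variables a1 a2 b1 b2 c1 c2 k : R.
Hypotheses (Ha1 : 0 < a1) (Ha2 : 0 < a2) (Hb1 : 0 < b1) (Hb2 : 0 < b2)
  (Hc1 : 0 < c1) (Hc2 : 0 < c2) (Hk : 0 <= k).

Lemma solution_pos (u v : R -> R) : is_solution a1 a2 b1 b2 c1 c2 k u v ->
  0 < u 0 -> 0 < v 0 -> forall t, 0 <= t -> 0 < u t /\ 0 < v t.
Proof.
  intros Hs Hu0 Hv0.
  assert (Hex : forall t, 0 <= t -> ex_derive u t /\ ex_derive v t)
    by (intros t Ht; destruct (Hs t Ht); split; eexists; eassumption).
  assert (Hu : forall t, 0 <= t -> 0 < u t).
  { apply (pos_of_is_derive_mult u (fun t => a1 - b1 * u t - c1 * v t)); [| |exact Hu0].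
    - intros t Ht. destruct (Hs t Ht) as [Hdu _]. unfold f_u in Hdu.
      replace (u t * (a1 - b1 * u t - c1 * v t))
        with (a1 * u t - b1 * u t ^ 2 - c1 * u t * v t) by ring. exact Hdu.
    - intros t Ht. destruct (Hex t Ht). apply ex_derive_continuity_pt.
      auto_derive; auto. }
  assert (Hv : forall t, 0 <= t -> 0 < v t).
  { apply (pos_of_is_derive_mult v (fun t => a2 / (1 + k * u t) - b2 * v t - c2 * u t));
      [| |exact Hv0].
    - intros t Ht. destruct (Hs t Ht) as [_ Hdv]. unfold f_v in Hdv.
      replace (v t * (a2 / (1 + k * u t) - b2 * v t - c2 * u t))
        with (a2 * v t / (1 + k * u t) - b2 * v t ^ 2 - c2 * u t * v t)
        by (unfold Rdiv; ring). exact Hdv.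
    - intros t Ht. destruct (Hex t Ht). assert (0 < u t) by auto.
      apply ex_derive_continuity_pt. auto_derive; repeat split; auto. nra. }
  intros t Ht. split; auto.
Qed.

Let us := a1 / b1.
Let al := c1 * a1 / (a2 * b1).

Hypothesis Hweak : a2 * c1 < a1 * b2.
Hypothesis Hfear : a2 <= c2 * us * (1 + k * us).

Fact us_pos : 0 < us.
Proof. apply Rdiv_lt_0_compat; assumption. Qed.

Fact al_pos : 0 < al.
Proof. apply Rdiv_lt_0_compat; apply Rmult_lt_0_compat; assumption. Qed.

Definition lyap_rate (u v : R) : R :=
  (1 - us / u) * f_u a1 b1 c1 u v + al * f_v a2 b2 c2 k u v.

Lemma lyap_rate_le : exists p q, 0 < p /\ 0 < q /\
  forall u v, 0 < u -> 0 < v -> lyap_rate u v <= - (p * (u - us) ^ 2 + q * v ^ 2).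
Proof.
  set (rho := a1 * b2 / (a2 * c1)).
  assert (Hrho : 1 < rho)
    by (apply Rlt_div_r; [apply Rmult_lt_0_compat |]; lra).
  destruct (quadratic_form_neg_def rho Hrho) as [s [[Hs0 Hs1] Hquad]].
  exists (b1 * s), (s * c1 ^ 2 / b1).
  assert (0 < c1 ^ 2) by (apply pow_lt, Hc1).
  split; [nra|]. split; [apply Rdiv_lt_0_compat; nra|].
  intros u v Hu Hv.
  set (y := us - u). set (z := c1 * v / b1). set (h := a2 / (1 + k * u) - c2 * u).
  assert (Hz : 0 < z) by (apply Rdiv_lt_0_compat; nra).
  assert (Hrate : lyap_rate u v = b1 * (- y ^ 2 + y * z - rho * z ^ 2) + al * v * h).
  { unfold lyap_rate, f_u, f_v, y, z, h, rho, al, us. field. split; [|split]; nra. }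
  replace (- (b1 * s * (u - us) ^ 2 + s * c1 ^ 2 / b1 * v ^ 2))
    with (- b1 * s * (y ^ 2 + z ^ 2)) by (unfold y, z; field; lra).
  rewrite Hrate.
  assert (Hvh : 0 <= al * v) by (generalize al_pos; nra).
  destruct (Rle_lt_dec u us) as [Hle | Hgt].
  - assert (Hchord : al * v * h <= b1 * (y * z)).
    { apply (Rle_trans _ (al * v * (a2 / us * (us - u)))).
      - apply Rmult_le_compat_l; [exact Hvh|].
        apply fear_response_le_chord; assumption.
      - right. unfold y, z, al, us. field. lra. }
    generalize (Hquad y z). nra.
  - assert (Hh : h <= 0) by (apply (fear_response_nonpos a2 c2 k us u); try lra; apply us_pos).
    assert (y * z <= 0) by (unfold y; nra).
    assert (al * v * h <= 0) by nra.
    assert (0 <= z ^ 2) by apply pow2_ge_0. assert (0 <= y ^ 2) by apply pow2_ge_0.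
    assert (- y ^ 2 + y * z - rho * z ^ 2 <= - s * (y ^ 2 + z ^ 2)) by nra.
    nra.
Qed.

Lemma lyap_rate_nonpos u v : 0 < u -> 0 < v -> lyap_rate u v <= 0.
Proof.
  intros Hu Hv. destruct lyap_rate_le as [p [q [Hp [Hq Hrate]]]].
  generalize (Hrate u v Hu Hv) (pow2_ge_0 (u - us)) (pow2_ge_0 v). nra.
Qed.

Section Solution.

Variables u v : R -> R.
Hypotheses (Hsol : is_solution a1 a2 b1 b2 c1 c2 k u v) (Hu0 : 0 < u 0) (Hv0 : 0 < v 0).

Let L t := lyap us al (u t) (v t).

Lemma is_derive_lyap_solution t : 0 <= t -> is_derive L t (lyap_rate (u t) (v t)).
Proof.
  intro Ht. destruct (Hsol t Ht) as [Hdu Hdv].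
  apply is_derive_lyap; [apply us_pos | apply (solution_pos u v Hsol Hu0 Hv0 t Ht) | |];
    assumption.
Qed.

Lemma lyap_solution_nonincreasing t : 0 <= t -> L t <= L 0.
Proof.
  intro Ht.
  apply (nonpos_derive_nonincreasing L (fun s => lyap_rate (u s) (v s))); [exact Ht | |].
  - intros s Hs. apply is_derive_lyap_solution; lra.
  - intros s Hs. destruct (solution_pos u v Hsol Hu0 Hv0 s ltac:(lra)).
    apply lyap_rate_nonpos; assumption.
Qed.

Lemma lyap_solution_eventually_lt eta : 0 < eta ->
  exists T, 0 <= T /\ forall t, T <= t -> L t < eta.
Proof.
  intro Heta. destruct lyap_rate_le as [p [q [Hp [Hq Hrate]]]].
  destruct (lyap_lt_near us al eta us_pos al_pos Heta) as [delta [Hdelta Hnear]].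
  apply (eventually_lt_of_dissipation L (fun t => lyap_rate (u t) (v t))
           (Rmin (p * delta ^ 2) (q * delta ^ 2))).
  - apply Rmin_pos; apply Rmult_lt_0_compat; auto; apply pow_lt, Hdelta.
  - exact is_derive_lyap_solution.
  - intros t Ht. destruct (solution_pos u v Hsol Hu0 Hv0 t Ht).
    apply lyap_rate_nonpos; assumption.
  - (* outside the sublevel set {L < eta}, (u, v) stays delta-away from the equilibrium *)
    intros t Ht HLt. destruct (solution_pos u v Hsol Hu0 Hv0 t Ht) as [Hut Hvt].
    apply (Rle_trans _ _ _ (Hrate _ _ Hut Hvt)), Ropp_le_contravar.
    generalize (pow2_ge_0 (u t - us)) (pow2_ge_0 (v t))
      (Rmin_l (p * delta ^ 2) (q * delta ^ 2)) (Rmin_r (p * delta ^ 2) (q * delta ^ 2)).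
    destruct (Rlt_le_dec (Rabs (u t - us)) delta) as [Hu | Hu].
    + destruct (Rlt_le_dec (v t) delta) as [Hv | Hv].
      * exfalso. generalize (Hnear (u t) (v t) (Rlt_le _ _ Hvt) Hu Hv). unfold L in HLt. lra.
      * assert (delta ^ 2 <= v t ^ 2) by (apply pow_incr; lra). nra.
    + rewrite <- (pow2_abs (u t - us)).
      assert (delta ^ 2 <= Rabs (u t - us) ^ 2) by (apply pow_incr; lra). nra.
  - intros t Ht. destruct (solution_pos u v Hsol Hu0 Hv0 t Ht) as [Hut Hvt].
    unfold L, lyap. generalize (volterra_nonneg us (u t) us_pos Hut) al_pos. nra.
Qed.

End Solution.

Lemma equilibrium_stable eps : 0 < eps -> exists delta, 0 < delta /\
  forall u v, is_solution a1 a2 b1 b2 c1 c2 k u v -> 0 < u 0 -> 0 < v 0 ->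
    dist2 (u 0) (v 0) us 0 < delta -> forall t, 0 <= t -> dist2 (u t) (v t) us 0 < eps.
Proof.
  intro Heps.
  destruct (near_of_lyap_lt us al (eps / 2) us_pos al_pos ltac:(lra)) as [eta [Heta Hnear]].
  destruct (lyap_lt_near us al eta us_pos al_pos Heta) as [delta [Hdelta Hsmall]].
  exists delta; split; [exact Hdelta|].
  intros u v Hsol Hu0 Hv0 Hd t Ht.
  destruct (dist2_lt_components _ _ _ _ _ Hd) as [Hdu Hdv].
  rewrite Rminus_0_r, Rabs_pos_eq in Hdv by lra.
  destruct (solution_pos u v Hsol Hu0 Hv0 t Ht) as [Hut Hvt].
  assert (HL : lyap us al (u t) (v t) < eta).
  { apply (Rle_lt_trans _ _ _ (lyap_solution_nonincreasing u v Hsol Hu0 Hv0 t Ht)).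
    apply Hsmall; [lra | exact Hdu | exact Hdv]. }
  destruct (Hnear (u t) (v t) Hut (Rlt_le _ _ Hvt) HL) as [Hut' Hvt'].
  apply dist2_lt_of_components; [exact Hut' | rewrite Rminus_0_r, Rabs_pos_eq; lra].
Qed.

Lemma equilibrium_attractive u v : is_solution a1 a2 b1 b2 c1 c2 k u v ->
  0 < u 0 -> 0 < v 0 -> is_lim u p_infty us /\ is_lim v p_infty 0.
Proof.
  intros Hsol Hu0 Hv0.
  assert (Hev : forall eps, 0 < eps -> exists T, forall t, T < t ->
                  Rabs (u t - us) < eps /\ Rabs (v t - 0) < eps).
  { intros eps Heps.
    destruct (near_of_lyap_lt us al eps us_pos al_pos Heps) as [eta [Heta Hnear]].
    destruct (lyap_solution_eventually_lt u v Hsol Hu0 Hv0 eta Heta) as [T [HT0 HT]].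
    exists T. intros t Ht.
    destruct (solution_pos u v Hsol Hu0 Hv0 t ltac:(lra)) as [Hut Hvt].
    destruct (Hnear (u t) (v t) Hut (Rlt_le _ _ Hvt) (HT t ltac:(lra))) as [Hu Hv].
    rewrite Rminus_0_r, (Rabs_pos_eq (v t)) by lra. split; assumption. }
  split; apply is_lim_spec; intro eps; destruct (Hev eps (cond_pos eps)) as [T HT];
    exists T; intros t Ht; apply HT, Ht.
Qed.

End FearCompetition.

Theorem mainTheorem1 (a1 a2 b1 b2 c1 c2 k : R) :
  0 < a1 -> 0 < a2 -> 0 < b1 -> 0 < b2 -> 0 < c1 -> 0 < c2 -> 0 <= k ->
  c2 / b1 < a2 / a1 -> a2 / a1 < b2 / c1 ->
  b1 * b2 - c1 * c2 > 0 ->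
  b2 * b1 > 2 * c1 * c2 ->
  k > (b1 ^ 2 * a2 - a1 * c2 * b1) / (a1 ^ 2 * c2) ->
  GAS a1 a2 b1 b2 c1 c2 k (a1 / b1) 0.
Proof.
  intros Ha1 Ha2 Hb1 Hb2 Hc1 Hc2 Hk _ Hratio _ _ Hthreshold.
  assert (Hweak : a2 * c1 < a1 * b2).
  { replace (a2 * c1) with (a2 / a1 * (a1 * c1)) by (field; lra).
    replace (a1 * b2) with (b2 / c1 * (a1 * c1)) by (field; lra).
    apply Rmult_lt_compat_r; [apply Rmult_lt_0_compat |]; assumption. }
  assert (Hfear := fear_threshold_bound a1 a2 b1 c2 k Ha1 Hb1 Hc2 Hthreshold).
  split.
  - intros eps Heps. apply (equilibrium_stable a1 a2 b1 b2 c1 c2 k); auto with real.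
  - intros u v Hsol Hu0 Hv0. apply (equilibrium_attractive a1 a2 b1 b2 c1 c2 k); auto with real.
Qed.
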